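(* Let $G$ be a digraph that is not strongly connected, and suppose $G$ has a strongly connected subdigraph $G'$ with at least one arc such that $G'$ is not a directed cycle. Then $d(L^kG)\to\infty$ as $k\to\infty$.
   Context: Digraphs are finite and may have loops and multiple arcs. The line digraph $LG$ has as vertex set the set of arcs of $G$, with an arc from $e$ to $f$ whenever the head of $e$ equals the tail of $f$; $L^0G=G$, $L^kG=L(L^{k-1}G)$. The inner diameter is $d(G)=\max\{\mathrm{dist}_G(u,v): \mathrm{dist}_G(u,v)<\infty\}$, where $\mathrm{dist}_G(u,v)$ is the length of a shortest directed walk from $u$ to $v$. A directed cycle is a digraph with vertices $v_0,\dots,v_{n-1}$ ($n\ge1$) and exactly the arcs $(v_i,v_{i+1\bmod n})$. *)

From Stdlib Require Import ClassicalEpsilon.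
From mathcomp Require Import all_boot.
Set Implicit Arguments. Unset Strict Implicit. Unset Printing Implicit Defensive.

Record digraph := Digraph {
  dvert : finType;
  darc : finType;
  tl : darc -> dvert;
  hd : darc -> dvert }.

Definition line_arc (G : digraph) : finType :=
  {p : darc G * darc G | hd p.1 == tl p.2}.

Definition line_digraph (G : digraph) : digraph :=
  @Digraph (darc G) (line_arc G)
    (fun p : line_arc G => (val p).1) (fun p : line_arc G => (val p).2).

Fixpoint iter_line (k : nat) (G : digraph) : digraph :=
  match k with 0 => G | k'.+1 => line_digraph (iter_line k' G) end.

Fixpoint walkn (G : digraph) (B : {set darc G}) (n : nat) (u v : dvert G) : bool :=
  match n with
  | 0 => u == v
  | n'.+1 => [exists a in B, (tl a == u) && walkn B n' (hd a) v]
  end.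

Definition reachable (G : digraph) (u v : dvert G) : Prop :=
  exists n, walkn [set: darc G] n u v.

(* dist_G(u,v): length of a shortest directed walk; (unused value 0 when
   v is unreachable from u: such pairs are excluded from the inner diameter
   and 0 does not affect a maximum over naturals). *)
Definition dist (G : digraph) (u v : dvert G) : nat :=
  match excluded_middle_informative (reachable u v) with
  | left H => ex_minn H
  | right _ => 0
  end.

Definition inner_diam (G : digraph) : nat :=
  \max_(u : dvert G) \max_(v : dvert G) dist u v.

Definition strongly_connected (G : digraph) : Prop :=
  forall u v : dvert G, reachable u v.

Definition is_subdigraph (G : digraph) (S : {set dvert G}) (B : {set darc G}) : Prop :=
  forall a, a \in B -> (tl a \in S) && (hd a \in S).

Definition sub_strongly_connected (G : digraph) (S : {set dvert G})
    (B : {set darc G}) : Prop :=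
  forall u v, u \in S -> v \in S -> exists n, walkn B n u v.

Definition sub_is_cycle (G : digraph) (S : {set dvert G}) (B : {set darc G}) : Prop :=
  exists n : nat, exists f : 'I_n.+1 -> dvert G, exists g : 'I_n.+1 -> darc G,
    [/\ injective f, injective g,
        S = [set f i | i in 'I_n.+1], B = [set g i | i in 'I_n.+1] &
        forall i : 'I_n.+1,
          tl (g i) = f i /\ hd (g i) = f (inord (i.+1 %% n.+1))].

From Stdlib Require Import ClassicalEpsilon.
From mathcomp Require Import all_boot zify.
Set Implicit Arguments. Unset Strict Implicit. Unset Printing Implicit Defensive.

(* If a strongly connected subdigraph is not a cycle, two of its arcs a <> b
   leave the same vertex (otherwise following the unique out-arcs traces a
   cycle).  The arcs of the subdigraph reachable from b without using a form a
   set F in which every arc has a predecessor in F, whereas every arc of the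
   subdigraph, a among them, has a successor in the subdigraph.  Such a
   configuration (an arc e with an unbounded past in F, an arc f outside F with
   an unbounded future, and the head of e reaching the tail of f) reproduces
   itself in the line digraph, where e and f become vertices whose distance is
   one more than that from the head of e to the tail of f.  Hence the inner
   diameter of L^k G is at least k. *)

Lemma walknS (G : digraph) (B : {set darc G}) n u v :
  walkn B n.+1 u v = [exists a in B, (tl a == u) && walkn B n (hd a) v].
Proof. by []. Qed.

Lemma walkn_sub (G : digraph) (B B' : {set darc G}) n u v :
  B \subset B' -> walkn B n u v -> walkn B' n u v.
Proof.
move=> sBB'; elim: n u => [|n IH] u //= /existsP [a /andP [aB /andP [tla w]]].
by apply/existsP; exists a; rewrite (subsetP sBB' a aB) tla /= IH.
Qed.

Lemma walkn_last (G : digraph) (B : {set darc G}) n u v :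
  walkn B n.+1 u v -> exists2 g, g \in B & walkn B n u (tl g) /\ hd g = v.
Proof.
elim: n u => [|n IH] u /= /existsP [a /andP [aB /andP [/eqP tla w]]].
  by exists a; rewrite // tla (eqP w).
have [g gB [w1 hg]] := IH _ w.
by exists g => //; split=> //; apply/existsP; exists a; rewrite aB tla eqxx.
Qed.

Lemma walkn_avoid (G : digraph) (B : {set darc G}) n x y :
  walkn B n y x -> exists m, walkn [set e in B | tl e != x] m y x.
Proof.
elim: n y => [|n IH] y /=; first by exists 0.
move=> /existsP [a /andP [aB /andP [/eqP ta w]]].
have [yx|yx] := eqVneq y x; first by exists 0; rewrite /= yx.
have [m wm] := IH _ w; exists m.+1; apply/existsP; exists a.
by rewrite inE aB ta yx eqxx.
Qed.

Lemma line_arcP (H : digraph) (x y : darc H) :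
  hd x = tl y -> exists2 p : darc (line_digraph H), tl p = x & hd p = y.
Proof. by move=> /eqP xy; exists (exist _ (x, y) xy : line_arc H). Qed.

Lemma walkn_line (H : digraph) n (e f : darc H) :
  walkn [set: darc (line_digraph H)] n.+1 e f = walkn [set: darc H] n (hd e) (tl f).
Proof.
elim: n e => [|n IH] e.
  apply/existsP/eqP => [[p /andP [_ /andP [/eqP <- /eqP <-]]]|ef].
    exact/eqP/(valP p).
  by have [p <- <-] := line_arcP ef; exists p; rewrite in_setT !eqxx.
rewrite walknS [RHS]walknS.
apply/existsP/existsP => [[p /andP [_ /andP [/eqP <- w]]]|[a /andP [_ /andP [/eqP ta w]]]].
  by exists (hd p); rewrite in_setT -IH w andbT eq_sym; apply: (valP p).
have [p tp hp] := line_arcP (esym ta).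
by exists p; rewrite in_setT tp eqxx IH hp.
Qed.

Definition far (H : digraph) (j : nat) (u v : dvert H) : Prop :=
  reachable u v /\ forall n, walkn [set: darc H] n u v -> j <= n.

Lemma far_line (H : digraph) j (e f : darc H) :
  e != f -> far j (hd e) (tl f) -> @far (line_digraph H) j.+1 e f.
Proof.
move=> ef [[n w] low]; split; first by exists n.+1; rewrite walkn_line.
case=> [/eqP eqef|m]; first by rewrite eqef eqxx in ef.
by rewrite walkn_line => /low.
Qed.

Lemma far_inner_diam (H : digraph) j (u v : dvert H) :
  far j u v -> j <= inner_diam H.
Proof.
move=> [R low]; apply: (@leq_trans (dist u v)).
  rewrite /dist; case: excluded_middle_informative => // R'.
  by case: ex_minnP => n /low.
apply: leq_trans (leq_bigmax u).
exact: (leq_bigmax (F := fun v => dist u v) v).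
Qed.

Definition backward_closed (H : digraph) (F : darc H -> Prop) : Prop :=
  forall e, F e -> exists2 g, F g & hd g = tl e.

Definition forward_closed (H : digraph) (B : darc H -> Prop) : Prop :=
  forall e, B e -> exists2 g, B g & tl g = hd e.

Definition diam_certificate (j : nat) (H : digraph) : Prop :=
  exists (F B : darc H -> Prop) (e f : darc H),
    [/\ backward_closed F, forward_closed B, F e, B f /\ ~ F f
      & far j (hd e) (tl f)].

Lemma diam_certificate_line j (H : digraph) :
  diam_certificate j H -> diam_certificate j.+1 (line_digraph H).
Proof.
move=> [F [B [e [f [Fback Bfwd Fe [Bf nFf] far_ef]]]]].
have [g Fg /line_arcP [e' tl_e' hd_e']] := Fback e Fe.
have [g' Bg' /esym /line_arcP [f' tl_f' hd_f']] := Bfwd f Bf.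
exists (fun p : darc (line_digraph H) => F (tl p)).
exists (fun p : darc (line_digraph H) => B (hd p)), e', f'; split.
- move=> p /Fback [x Fx /line_arcP [q tl_q hd_q]].
  by exists q; rewrite ?tl_q ?hd_q.
- move=> p /Bfwd [x Bx /esym /line_arcP [q tl_q hd_q]].
  by exists q; rewrite ?tl_q ?hd_q.
- by rewrite tl_e'.
- by rewrite hd_f' tl_f'.
rewrite hd_e' tl_f'; apply: far_line far_ef.
by apply: contraPneq nFf => <-.
Qed.

Lemma diam_certificate_iter (G : digraph) :
  diam_certificate 0 G -> forall k, diam_certificate k (iter_line k G).
Proof. by move=> cert0; elim=> [|k IH] //=; apply: diam_certificate_line. Qed.

Lemma diam_certificate_inner_diam j (H : digraph) :
  diam_certificate j H -> j <= inner_diam H.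
Proof. by move=> [F [B [e [f [_ _ _ _ /far_inner_diam]]]]]. Qed.

Lemma sub_out_arc (G : digraph) (S : {set dvert G}) (B : {set darc G}) e y :
  is_subdigraph S B -> sub_strongly_connected S B -> e \in B -> y \in S ->
  exists2 c, c \in B & tl c = y.
Proof.
move=> sub sc eB yS; have /andP [teS _] := sub e eB.
have [[|n] w] := sc _ _ yS teS; first by exists e; rewrite // (eqP w).
by move: w; rewrite walknS => /existsP [c /andP [cB /andP [/eqP tc _]]]; exists c.
Qed.

Lemma sub_forward_closed (G : digraph) (S : {set dvert G}) (B : {set darc G}) :
  is_subdigraph S B -> sub_strongly_connected S B -> forward_closed (fun e => e \in B).
Proof.
move=> sub sc e eB; have /andP [_ heS] := sub e eB.
exact: sub_out_arc sub sc eB heS.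
Qed.

Lemma sub_branching_diam_certificate (G : digraph) (S : {set dvert G})
    (B : {set darc G}) a b :
  is_subdigraph S B -> sub_strongly_connected S B ->
  a \in B -> b \in B -> a != b -> tl a = tl b -> diam_certificate 0 G.
Proof.
move=> sub sc aB bB ab tab.
have bBa : b \in B :\ a by rewrite !inE eq_sym ab bB.
have [n w_b] : exists n, walkn (B :\ a) n (hd b) (tl b).
  have /andP [tbS hbS] := sub b bB.
  have [m /walkn_avoid [n w]] := sc _ _ hbS tbS.
  exists n; apply: walkn_sub w; apply/subsetP => g.
  by rewrite !inE -tab => /andP [gB tg]; rewrite gB andbT; apply: contraNneq tg => ->.
exists (fun g => g \in B :\ a /\ exists n, walkn (B :\ a) n (hd b) (tl g)).
exists (fun e => e \in B), b, a; split.
- move=> g [_ [[|m] w]]; first by exists b; [split; last exists n | apply/eqP].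
  have [g' g'Ba [w' hg']] := walkn_last w.
  by exists g' => //; split; last exists m.
- exact: sub_forward_closed sub sc.
- by split; last exists n.
- by split=> // -[]; rewrite !inE eqxx.
split=> //; exists n; rewrite tab; exact: walkn_sub (subsetT _) w_b.
Qed.

Section OutFunctional.

Variables (G : digraph) (S : {set dvert G}) (B : {set darc G}) (e0 : darc G).
Hypotheses (subSB : is_subdigraph S B) (scSB : sub_strongly_connected S B).
Hypotheses (e0B : e0 \in B) (tl_inj : {in B &, injective (@tl G)}).

Let out_arc (y : dvert G) : darc G := odflt e0 [pick c in B | tl c == y].

Let nxt (y : dvert G) : dvert G := hd (out_arc y).

Let orb (i : nat) : dvert G := iter i nxt (tl e0).

Lemma out_arcP y : y \in S -> out_arc y \in B /\ tl (out_arc y) = y.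
Proof.
move=> yS; rewrite /out_arc; case: pickP => [c /andP [cB /eqP]|none] //=.
have [c cB tc] := sub_out_arc subSB scSB e0B yS.
by move: (none c); rewrite cB tc eqxx.
Qed.

Lemma out_arc_tl c : c \in B -> out_arc (tl c) = c.
Proof.
move=> cB; have /andP [tcS _] := subSB cB.
by have [ocB toc] := out_arcP tcS; apply: tl_inj.
Qed.

Lemma nxt_in y : y \in S -> nxt y \in S.
Proof. by move=> /out_arcP [cB _]; have /andP [] := subSB cB. Qed.

Lemma orb_in i : orb i \in S.
Proof.
have /andP [t0S _] := subSB e0B.
by elim: i => [|i IH] //=; apply: nxt_in.
Qed.

Lemma walkn_iter_nxt m y z : y \in S -> walkn B m y z -> z = iter m nxt y.
Proof.
elim: m y => [|m IH] y yS; first by move/eqP.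
rewrite walknS => /existsP [c /andP [cB /andP [/eqP tc w]]].
rewrite iterSr -{}tc in yS w *.
by rewrite /nxt out_arc_tl //; apply: IH w; have /andP [] := subSB cB.
Qed.

Lemma orb_walkn m y : walkn B m (tl e0) y -> y = orb m.
Proof. by apply: walkn_iter_nxt; apply: (orb_in 0). Qed.

Lemma orb_returns : exists p, (0 < p) && (orb p == tl e0).
Proof.
have [m w] := scSB (orb_in 1) (orb_in 0).
by exists m.+1; rewrite /orb iterSr -(walkn_iter_nxt (orb_in 1) w) eqxx.
Qed.

Let per := ex_minn orb_returns.

Lemma per_gt0 : 0 < per.
Proof. by rewrite /per; case: ex_minnP => p /andP []. Qed.

Lemma orb_per : orb per = tl e0.
Proof. by rewrite /per; case: ex_minnP => p /andP [_ /eqP]. Qed.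

Lemma orb_mod i : orb i = orb (i %% per).
Proof.
rewrite {1}(divn_eq i per); elim: (i %/ per) => [|q IH]; first by rewrite add0n.
by rewrite mulSn -addnA addnC /orb iterD -/(orb per) orb_per; apply: IH.
Qed.

Lemma orb_inj i j : i < per -> j < per -> orb i = orb j -> i = j.
Proof.
wlog ij : i j / i <= j => [hwlog|ilt jlt eq_ij].
  by move=> ilt jlt eq_ij; case/orP: (leq_total i j) => /hwlog; last symmetry; auto.
have ret : orb (per - j + i) = tl e0.
  by rewrite /orb iterD -/(orb i) eq_ij /orb -iterD (subnK (ltnW jlt)); apply: orb_per.
rewrite /per in jlt ret; case: ex_minnP jlt ret => p _ pmin jlt ret.
apply/eqP; rewrite eqn_leq ij leqNgt; apply/negP => ji.
have : p <= p - j + i by apply: pmin; rewrite ret eqxx andbT; lia.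
lia.
Qed.

Lemma out_functional_cycle : sub_is_cycle S B.
Proof.
have [n per_eq] : exists n, per = n.+1 by exists per.-1; rewrite prednK ?per_gt0.
have orb_modS i : orb i = orb (i %% n.+1) by rewrite -per_eq orb_mod.
have orb_injS (i j : 'I_n.+1) : orb i = orb j -> i = j.
  by move=> eq_ij; apply: val_inj; apply: orb_inj eq_ij; rewrite per_eq.
exists n, (fun i => orb i), (fun i => out_arc (orb i)); split.
- by move=> i j /orb_injS.
- move=> i j eq_ij; apply: orb_injS.
  by rewrite -(out_arcP (orb_in i)).2 eq_ij (out_arcP (orb_in j)).2.
- apply/setP => y; apply/idP/imsetP => [yS|[i _ ->]]; last exact: orb_in.
  have [m /orb_walkn ->] := scSB (orb_in 0) yS.
  by exists (Ordinal (ltn_pmod m (ltn0Sn n))); rewrite //= orb_modS.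
- apply/setP => c; apply/idP/imsetP => [cB|[i _ ->]]; last by case: (out_arcP (orb_in i)).
  have /andP [tcS _] := subSB cB.
  have [m /orb_walkn tc] := scSB (orb_in 0) tcS.
  exists (Ordinal (ltn_pmod m (ltn0Sn n))) => //=.
  by rewrite -orb_modS -tc out_arc_tl.
- move=> i; split; first by case: (out_arcP (orb_in i)).
  by rewrite inordK ?ltn_pmod // -orb_modS.
Qed.

End OutFunctional.

Lemma sub_diam_certificate (G : digraph) (S : {set dvert G}) (B : {set darc G}) :
  is_subdigraph S B -> sub_strongly_connected S B -> B != set0 ->
  ~ sub_is_cycle S B -> diam_certificate 0 G.
Proof.
move=> sub sc /set0Pn [e0 e0B] ncy.
have [/existsP [a /andP [aB /existsP [b /andP [bB /andP [ab /eqP tab]]]]] | noBranch] :=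
  boolP [exists a in B, exists b in B, (a != b) && (tl a == tl b)].
  exact: sub_branching_diam_certificate sub sc aB bB ab tab.
case: ncy; apply: out_functional_cycle sub sc e0B _ => a b aB bB tab.
apply/eqP; apply: contraNT noBranch => ab; apply/existsP; exists a.
by rewrite aB; apply/existsP; exists b; rewrite bB ab tab eqxx.
Qed.

(* The argument does not need the hypothesis that G is not strongly connected. *)
Theorem proposition3p1 (G : digraph) :
  ~ strongly_connected G ->
  (exists (S : {set dvert G}) (B : {set darc G}),
      [/\ is_subdigraph S B, sub_strongly_connected S B, B != set0
        & ~ sub_is_cycle S B]) ->
  forall M : nat, exists K : nat, forall k : nat, K <= k ->
    M <= inner_diam (iter_line k G).
Proof.
move=> _ [S [B [sub sc nB ncy]]] M; exists M => k Mk.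
apply: leq_trans Mk (diam_certificate_inner_diam _).
exact: diam_certificate_iter (sub_diam_certificate sub sc nB ncy) k.
Qed.
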